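(* If $\sigma\in\operatorname{Aut}(\mathcal{H}_N)$, then $\sigma(\mathcal{H}_N')=\mathcal{H}_N'$ and $\sigma(\mathfrak h)=\mathfrak h$.
   Context: $\mathbb{K}$ is an algebraically closed field of characteristic zero, $N=2m\ge2$ even, $(\cdot,\cdot)$ the bilinear form on $\mathbb{K}^N$ with $(e_i,e_j)=\delta_{ij}$. Let $A_N=\mathbb{K}[t_1^{\pm1},\dots,t_N^{\pm1}]$, $d_i=t_i\frac{\partial}{\partial t_i}$, $t^{\bm r}=t_1^{r_1}\cdots t_N^{r_N}$, $D(u,\bm r)=\sum_i u_it^{\bm r}d_i$. Let $\bm J=\begin{pmatrix} O_m & I_m\\ -I_m & O_m\end{pmatrix}$, $\overline{\bm r}=\bm J\bm r$, $h_{\bm r}=D(\overline{\bm r},\bm r)$, $\mathfrak h=\operatorname{span}_{\mathbb{K}}\{d_1,\dots,d_N\}=\{D(u,\bm0):u\in\mathbb{K}^N\}$. The Hamiltonian Lie algebra is $\mathcal{H}_N=\operatorname{span}_{\mathbb{K}}\{h_{\bm r}:\bm r\ne\bm0\}\oplus\mathfrak h$ with commutator bracket ($[h_{\bm r},h_{\bm s}]=(\overline{\bm r},\bm s)h_{\bm r+\bm s}$, $[D(u,\bm0),h_{\bm r}]=(u,\bm r)h_{\bm r}$), and $\mathcal{H}_N'=[\mathcal{H}_N,\mathcal{H}_N]=\operatorname{span}_{\mathbb{K}}\{h_{\bm r}:\bm r\ne\bm0\}$. *)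

From HB Require Import structures.
From mathcomp Require Import all_boot all_order all_algebra.
From mathcomp Require Import finmap.
From mathcomp.multinomials Require Import monalg.

Set Implicit Arguments.
Unset Strict Implicit.
Unset Printing Implicit Defensive.

Import Order.TTheory GRing.Theory Num.Theory.
Local Open Scope ring_scope.

(* N = 2m = m + m.  Elements of Z^N are row vectors 'rV[int]_(m+m),
   elements of K^N are row vectors 'rV[K]_(m+m). *)

Definition bform (R : pzRingType) (n : nat) (u v : 'rV[R]_n) : R :=
  \sum_(i < n) u 0 i * v 0 i.

Definition Jmx (m : nat) : 'M[int]_(m + m) :=
  block_mx 0 1%:M (- 1%:M) 0.

(* rbar = J r  (r written as a row vector, so J r is r *m J^T) *)
Definition rbar (m : nat) (r : 'rV[int]_(m + m)) : 'rV[int]_(m + m) :=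
  r *m (Jmx m)^T.

Definition rK (K : pzRingType) (n : nat) (r : 'rV[int]_n) : 'rV[K]_n :=
  map_mx (fun z : int => z%:~R) r.

Definition nzkey (m : nat) := {r : 'rV[int]_(m + m) | r != 0}.

(* The Hamiltonian Lie algebra H_N, realised on its basis
   {h_r : r <> 0} U {d_1, ..., d_N}:
   an element is a pair (f, u) standing for
      sum_{r} f_r h_r  +  D(u, 0).
   The first component is a finitely supported K-valued function on
   nonzero r (coordinates w.r.t. the h_r), the second one u in K^N. *)
Definition HN (K : fieldType) (m : nat) : lmodType K :=
  ({malg K[nzkey m]} * 'rV[K]_(m + m))%type.

(* the basis element h_r, with the convention h_0 = D(J 0, 0) = 0 *)
Definition hpart (K : fieldType) (m : nat) (r : 'rV[int]_(m + m))
    : {malg K[nzkey m]} :=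
  if insub r is Some k then << (k : nzkey m) >> else 0.

(* The Lie bracket, extended bilinearly from
     [h_r, h_s] = (rbar, s) h_{r+s},
     [D(u,0), h_r] = (u, r) h_r,  [D(u,0), D(v,0)] = 0. *)
Definition HNbr (K : fieldType) (m : nat) (x y : HN K m) : HN K m :=
  let f := x.1 in let u := x.2 in let g := y.1 in let v := y.2 in
  (\sum_(a <- msupp f) \sum_(b <- msupp g)
      (f@_a * g@_b * (bform (rbar (val a)) (val b))%:~R)
        *: hpart K (val a + val b)
   + \sum_(b <- msupp g) (g@_b * bform u (rK K (val b))) *: << b >>
   - \sum_(a <- msupp f) (f@_a * bform v (rK K (val a))) *: << a >>,
   0).

(* H_N' = span{h_r : r <> 0} *)
Definition HNder (K : fieldType) (m : nat) : pred (HN K m) :=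
  [pred x | x.2 == 0].

(* the Cartan subalgebra h = span{d_1, ..., d_N} = {D(u,0)} *)
Definition HNcartan (K : fieldType) (m : nat) : pred (HN K m) :=
  [pred x | x.1 == 0].

Definition is_HN_aut (K : fieldType) (m : nat) (sigma : HN K m -> HN K m) : Prop :=
  [/\ linear sigma, bijective sigma &
      forall x y, sigma (HNbr x y) = HNbr (sigma x) (sigma y)].

Definition maps_onto (T : Type) (sigma : T -> T) (A : pred T) : Prop :=
  (forall x, A x -> A (sigma x)) /\ (forall y, A y -> exists2 x, A x & sigma x = y).

From HB Require Import structures.
From mathcomp Require Import all_boot all_order all_algebra.
From mathcomp Require Import finmap.
From mathcomp.multinomials Require Import monalg.

Set Implicit Arguments.
Unset Strict Implicit.
Unset Printing Implicit Defensive.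

Import Order.TTheory GRing.Theory Num.Theory.
Local Open Scope ring_scope.

(* The bracket of H_N always lands in H_N' and every h_r is itself a bracket,
   h_r = [D(r / (r, r), 0), h_r]; hence an automorphism maps H_N' into H_N'.

   For the Cartan part, call x ad-locally finite when every y is killed by
   some product of operators ad x - c.  Every D(u, 0) acts diagonally on the
   basis, so it is ad-locally finite, and automorphisms transport this
   property.  Conversely, let x have a nonzero coefficient on some h_r.  Order
   Z^N lexicographically, or by the reverse order, so that the largest
   exponent r occurring in x is >= 0.  Starting from h_(Jr), each application
   of ad x - c raises the leading exponent by r, from Jr + n r to
   Jr + (n + 1) r, and multiplies the leading coefficient by
   x_r (Jr, Jr + n r) = x_r (Jr, Jr) <> 0 (in characteristic 0); so no such
   product kills h_(Jr). *)

Lemma bformE (R : pzRingType) n (u v : 'rV[R]_n) : bform u v = (u *m v^T) 0 0.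
Proof. by rewrite mxE; apply: eq_bigr => i _; rewrite mxE. Qed.

Lemma trmx_Jmx m : (Jmx m)^T = - Jmx m.
Proof.
by rewrite /Jmx tr_block_mx !trmx0 linearN /= trmx1 opp_block_mx !oppr0 opprK.
Qed.

Lemma Jmx_sqr m : Jmx m *m Jmx m = - 1%:M.
Proof.
rewrite /Jmx mulmx_block !mul0mx !mulmx0 mul1mx mulmx1 !add0r !addr0.
by rewrite [in RHS]scalar_mx_block opp_block_mx oppr0.
Qed.

Lemma rbarK m (r : 'rV[int]_(m + m)) : rbar (rbar r) = - r.
Proof.
by rewrite /rbar -mulmxA trmx_Jmx mulmxN mulNmx opprK Jmx_sqr mulmxN mulmx1.
Qed.

Lemma rbar_eq0 m (r : 'rV[int]_(m + m)) : (rbar r == 0) = (r == 0).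
Proof.
apply/eqP/eqP => [r0|->]; last by rewrite /rbar mul0mx.
by apply/eqP; rewrite -oppr_eq0 -rbarK r0 /rbar mul0mx.
Qed.

Lemma bform_rbarl m (r : 'rV[int]_(m + m)) : bform (rbar r) r = 0.
Proof.
have /eqP : bform (rbar r) r = - bform (rbar r) r.
  have tr11 (A : 'M[int]_1) : A 0 0 = A^T 0 0 by rewrite mxE.
  rewrite !bformE /rbar {1}tr11 !trmx_mul !trmxK trmx_Jmx mulmxA.
  by rewrite mulmxN mulNmx [in RHS]mxE opprK.
by rewrite -subr_eq0 opprK -mulr2n mulrn_eq0 => /eqP.
Qed.

Lemma bform0l (R : pzRingType) n (v : 'rV[R]_n) : bform 0 v = 0.
Proof. by rewrite bformE mul0mx mxE. Qed.

Lemma bform0r (R : pzRingType) n (u : 'rV[R]_n) : bform u 0 = 0.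
Proof. by rewrite bformE trmx0 mulmx0 mxE. Qed.

Lemma bformDr (R : pzRingType) n (u v w : 'rV[R]_n) :
  bform u (v + w) = bform u v + bform u w.
Proof. by rewrite !bformE linearD mulmxDr mxE. Qed.

Lemma bformZl (R : comPzRingType) n c (u v : 'rV[R]_n) :
  bform (c *: u) v = c * bform u v.
Proof. by rewrite !bformE -scalemxAl mxE. Qed.

Lemma bform_rK (R : pzRingType) n (a b : 'rV[int]_n) :
  bform (rK R a) (rK R b) = (bform a b)%:~R.
Proof.
rewrite /bform (raddf_sum (intr : int -> R)); apply: eq_bigr => i _.
by rewrite !mxE -intrM.
Qed.

Lemma bform_self_eq0 n (a : 'rV[int]_n) : (bform a a == 0) = (a == 0).
Proof.
apply/idP/idP => [|/eqP->]; last by rewrite bform0l.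
rewrite /bform psumr_eq0 => [/allP a0|i _]; last by rewrite -expr2 sqr_ge0.
apply/eqP/matrixP => i j; rewrite ord1 mxE.
by have := a0 j (mem_index_enum _); rewrite -expr2 sqrf_eq0 => /eqP.
Qed.

Lemma intr_eq0_pchar0 (K : fieldType) (z : int) :
  [pchar K] =i pred0 -> (z%:~R == 0 :> K) = (z == 0).
Proof.
move/pcharf0P => natr_eq0.
by case: z => n; rewrite ?NegzE ?mulrNz ?oppr_eq0 -pmulrn natr_eq0.
Qed.

Lemma sum_seq_single (R : nmodType) (I : eqType) (s : seq I) (i : I) (F : I -> R) :
  uniq s -> (i \notin s -> F i = 0) -> (forall j, j \in s -> j != i -> F j = 0) ->
  \sum_(j <- s) F j = F i.
Proof.
move=> us Fi F0; have [is_|i_s] := boolP (i \in s); last first.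
  rewrite Fi // big1_seq // => j /andP[_ js].
  by apply: F0 => //; apply: contraNneq i_s => <-.
rewrite (bigD1_seq i) //= big1_seq ?addr0 // => j /andP[ji js]; exact: F0.
Qed.

Lemma exists_max_seq (T : eqType) (le : rel T) (s : seq T) :
  total le -> transitive le -> s != [::] ->
  exists2 k, k \in s & forall a, a \in s -> le a k.
Proof.
move=> le_total le_trans s_neq0; pose ge a b := le b a.
have ge_trans : transitive ge by move=> b a c ab bc; exact: le_trans bc ab.
have := sort_sorted (fun a b => le_total b a) s; have := mem_sort ge s.
case: (sort ge s) (size_sort ge s) => [/esym/eqP|k t _ mem_s].
  by rewrite size_eq0 (negPf s_neq0).
move=> /(order_path_min ge_trans)/allP t_le; exists k.
  by rewrite -mem_s mem_head.
move=> a; rewrite -mem_s inE => /predU1P[->|/t_le //].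
by case/orP: (le_total k k).
Qed.

Lemma maps_onto_can (T : Type) (s g : T -> T) (A : pred T) :
  cancel g s -> {homo s : x / A x} -> {homo g : x / A x} -> maps_onto s A.
Proof. by move=> gK sA gA; split=> // y Ay; exists (g y); rewrite ?gK ?gA. Qed.

Lemma can2_morph2 (T : Type) (op : T -> T -> T) (f g : T -> T) :
  cancel f g -> cancel g f -> {morph f : x y / op x y} -> {morph g : x y / op x y}.
Proof. by move=> fK gK f_op x y; apply: (can_inj fK); rewrite f_op !gK. Qed.

Definition translation_order (V : zmodType) (le : rel V) :=
  [/\ total le, transitive le, antisymmetric le &
      forall a b c, le a b -> le (a + c) (b + c)].

Section TranslationOrder.
Variables (V : zmodType) (le : rel V).
Hypothesis le_order : translation_order le.

Lemma translation_order_dual : translation_order (fun a b => le b a).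
Proof.
case: le_order => le_total le_trans le_anti le_addr; split.
- by move=> a b; exact: le_total.
- by move=> b a c ab bc; exact: le_trans bc ab.
- by move=> a b; rewrite andbC; exact: le_anti.
- by move=> a b c; exact: le_addr.
Qed.

Lemma translation_order_refl : reflexive le.
Proof. by case: le_order => le_total _ _ _ a; case/orP: (le_total a a). Qed.

Lemma le_addl a b c : le a b -> le (c + a) (c + b).
Proof.
by case: le_order => _ _ _ le_addr /(le_addr _ _ c); rewrite ![c + _]addrC.
Qed.

Lemma le_add_eq a b r p : le a r -> le b p -> le (r + p) (a + b) -> a = r /\ b = p.
Proof.
case: le_order => _ le_trans le_anti le_addr a_r b_p rp_ab.
have ab_rb : le (a + b) (r + b) by exact: le_addr.
have rb_rp : le (r + b) (r + p) by exact: le_addl.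
have rb_eq : r + b = r + p.
  by apply: le_anti; rewrite rb_rp (le_trans _ _ _ rp_ab ab_rb).
have b_eq : b = p by apply: (addrI r).
split=> //; apply: (addIr b); apply: le_anti.
by rewrite ab_rb rb_eq rp_ab.
Qed.

End TranslationOrder.

Definition lexle n : rel 'rV[int]_n := fun a b =>
  ([seq a 0 i | i <- enum 'I_n] <= [seq b 0 i | i <- enum 'I_n] :> seqlexi int)%O.

Lemma lexi_map_addr (I : Type) (s : seq I) (f g c : I -> int) :
  ([seq f i | i <- s] <= [seq g i | i <- s] :> seqlexi int)%O ->
  ([seq f i + c i | i <- s] <= [seq g i + c i | i <- s] :> seqlexi int)%O.
Proof.
elim: s => [//|i s IH] /=; rewrite !lexi_cons !lerD2r.
by case/andP => -> /= fg; apply/implyP => /(implyP fg) /IH.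
Qed.

Lemma lexle_translation_order n : translation_order (@lexle n).
Proof.
split.
- by move=> a b; exact: le_total.
- by move=> b a c; exact: le_trans.
- move=> a b /le_anti /eq_in_map ab; apply/matrixP => i j.
  by rewrite ord1 ab // mem_enum.
- move=> a b c; have addE z : [seq (z + c) 0 i | i <- enum 'I_n] =
                                [seq z 0 i + c 0 i | i <- enum 'I_n].
    by apply: eq_map => i; rewrite mxE.
  by rewrite /lexle !addE; exact: lexi_map_addr.
Qed.

Section HamiltonianAlgebra.
Variables (K : fieldType) (m : nat).
Local Notation H := (HN K m).
Local Notation key := (nzkey m).

Lemma malg_expand (f : {malg K[key]}) : f = \sum_(k <- msupp f) f@_k *: << k >>.
Proof.
rewrite {1}(monalgE f); apply: eq_bigr => k _; apply/malgP => q.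
by rewrite mcoeffU mcoeffZ mcoeffU mulr_natr.
Qed.

Lemma coef_sum_msupp (f : {malg K[key]}) (F : key -> K) q :
  (\sum_(k <- msupp f) (f@_k * F k) *: << k >>)@_q = f@_q * F q.
Proof.
rewrite raddf_sum /= (sum_seq_single (i := q)) ?fset_uniq //.
- by rewrite mcoeffZ mcoeffU eqxx mulr1.
- by move=> q_f; rewrite mcoeffZ (mcoeff_outdom q_f) !mul0r.
- by move=> k _ kq; rewrite mcoeffZ mcoeffU (negPf kq) mulr0.
Qed.

Lemma coef_hpart q (p : key) : (hpart K q)@_p = (val p == q)%:R.
Proof.
rewrite /hpart; case: insubP => [k _ <-|/negbNE/eqP->].
  by rewrite mcoeffU (inj_eq val_inj) eq_sym.
by rewrite mcoeff0 (negPf (valP p)).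
Qed.

Lemma HNbr_coef (x z : H) (q : key) :
  (HNbr x z).1@_q =
  \sum_(a <- msupp x.1) \sum_(b <- msupp z.1)
     x.1@_a * z.1@_b * (bform (rbar (val a)) (val b))%:~R *
     (val q == val a + val b)%:R
  + z.1@_q * bform x.2 (rK K (val q)) - x.1@_q * bform z.2 (rK K (val q)).
Proof.
rewrite mcoeffB mcoeffD [X in _ + X - _]coef_sum_msupp [X in _ - X]coef_sum_msupp.
congr (_ + _ - _); rewrite raddf_sum; apply: eq_bigr => a _ /=.
by rewrite raddf_sum; apply: eq_bigr => b _ /=; rewrite mcoeffZ coef_hpart.
Qed.

Lemma HNbr_cartan_coef u (z : H) q :
  (HNbr (0, u) z).1@_q = z.1@_q * bform u (rK K (val q)).
Proof. by rewrite HNbr_coef msupp0 big_nil mcoeff0 add0r mul0r subr0. Qed.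

Hypothesis charK0 : [pchar K] =i pred0.

Lemma hpart_eigen (k : key) :
  ((<< k >>, 0) : H) =
  HNbr (0, (bform (rK K (val k)) (rK K (val k)))^-1 *: rK K (val k)) (<< k >>, 0).
Proof.
apply: injective_projections => //; apply/malgP => q.
rewrite HNbr_cartan_coef mcoeffU; case: eqP => [<-|]; last by rewrite mul0r.
rewrite bformZl mulVf ?mul1r // bform_rK intr_eq0_pchar0 //.
by rewrite bform_self_eq0 (valP k).
Qed.

Definition ad_sub (x : H) (c : K) (y : H) : H := HNbr x y - c *: y.

Definition ad_locally_finite (x : H) :=
  forall y, exists cs : seq K, foldr (ad_sub x) y cs = 0.

Lemma ad_sub_snd x c (w : H) : w.2 = 0 -> (ad_sub x c w).2 = 0.
Proof. by move=> w2; rewrite /= w2 scaler0 subr0. Qed.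

Section Morphism.
Variable s : {linear H -> H}.
Hypothesis s_br : {morph s : x y / HNbr x y}.

Lemma HNder_morph : {homo s : x / HNder x}.
Proof.
move=> x /eqP x2; apply/eqP.
have -> : x = \sum_(k <- msupp x.1) x.1@_k *: ((<< k >>, 0) : H).
  apply: injective_projections.
    by rewrite raddf_sum {1}[x.1]malg_expand; apply: eq_bigr.
  by rewrite x2 raddf_sum big1 // => k _ /=; rewrite scaler0.
rewrite linear_sum raddf_sum big1 // => k _ /=.
by rewrite linearZ hpart_eigen s_br /= scaler0.
Qed.

Lemma ad_locally_finite_morph (g : H -> H) x :
  cancel g s -> ad_locally_finite x -> ad_locally_finite (s x).
Proof.
move=> gK x_lf y; have [cs x_cs] := x_lf (g y); exists cs.
have s_foldr z : s (foldr (ad_sub x) z cs) = foldr (ad_sub (s x)) (s z) cs.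
  by elim: cs {x_cs} => //= c cs IH; rewrite linearB linearZ s_br IH.
by rewrite -(gK y) -s_foldr x_cs linear0.
Qed.

End Morphism.

Lemma foldr_ad_sub_cartan_coef u (w : H) cs q :
  (foldr (ad_sub (0, u)) w cs).1@_q =
  w.1@_q * \prod_(c <- cs) (bform u (rK K (val q)) - c).
Proof.
elim: cs => [|c cs IH]; first by rewrite big_nil mulr1.
rewrite big_cons /= mcoeffB mcoeffZ HNbr_cartan_coef IH.
by rewrite [c * _]mulrC -mulrBr -mulrA [_ * (_ - c)]mulrC.
Qed.

Lemma ad_locally_finite_cartan u : ad_locally_finite (0, u).
Proof.
move=> y; exists (0 :: [seq bform u (rK K (val k)) | k <- msupp y.1]).
apply: injective_projections; last by rewrite /= scale0r subr0.
apply/malgP => q; rewrite foldr_ad_sub_cartan_coef mcoeff0.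
have [q_y|/mcoeff_outdom->] := boolP (q \in msupp y.1); last by rewrite mul0r.
apply/eqP; rewrite mulf_eq0 prodf_seq_eq0; apply/orP; right; apply/hasP.
exists (bform u (rK K (val q))); rewrite ?subrr ?eqxx //.
by rewrite inE (map_f (fun k => bform u (rK K (val k))) q_y) orbT.
Qed.

Section LeadingTerm.
Variable le : rel 'rV[int]_(m + m).
Hypothesis le_order : translation_order le.

Definition is_lead (f : {malg K[key]}) (k : key) :=
  f@_k != 0 /\ forall q, f@_q != 0 -> le (val q) (val k).

Lemma exists_lead f : f != 0 -> exists k, is_lead f k.
Proof.
case: le_order => le_total le_trans _ _ f_neq0.
have supp_neq0 : (msupp f : seq key) != [::].
  by apply: contra f_neq0 => /eqP supp0; rewrite [f]malg_expand supp0 big_nil.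
have [k k_f k_max] := exists_max_seq (le := fun a b : key => le (val a) (val b))
  (fun a b => le_total _ _) (fun b a c => le_trans _ _ _) supp_neq0.
by exists k; split=> [|q]; rewrite mcoeff_neq0 //; exact: k_max.
Qed.

Section LeadingBracket.
Variables (x : H) (kr : key).
Hypotheses (x_lead : is_lead x.1 kr) (kr_ge0 : le 0 (val kr)).

Lemma HNbr_lead_coef (w : H) (k q : key) :
    w.2 = 0 -> is_lead w.1 k -> le (val kr + val k) (val q) -> w.1@_q = 0 ->
  (HNbr x w).1@_q =
  x.1@_kr * w.1@_k * (bform (rbar (val kr)) (val k))%:~R *
  (val q == val kr + val k)%:R.
Proof.
move=> w2 [wk_neq0 w_max] top wq0.
pose T a b := x.1@_a * w.1@_b * (bform (rbar (val a)) (val b))%:~R *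
              (val q == val a + val b)%:R.
have T0 a b : (a != kr) || (b != k) -> T a b = 0.
  move=> ab; rewrite /T; case: eqP => [qab|]; last by rewrite mulr0.
  have [->|xa] := eqVneq x.1@_a 0; first by rewrite !mul0r.
  have [->|wb] := eqVneq w.1@_b 0; first by rewrite mulr0 !mul0r.
  rewrite qab in top.
  have [/val_inj ar /val_inj bk] :=
    le_add_eq le_order (x_lead.2 _ xa) (w_max _ wb) top.
  by rewrite ar bk !eqxx in ab.
rewrite HNbr_coef wq0 w2 bform0l mul0r mulr0 subr0 addr0 -/(T kr k).
rewrite (sum_seq_single (i := kr)) ?fset_uniq //.
- rewrite (sum_seq_single (i := k)) ?fset_uniq //.
  + by rewrite -mcoeff_neq0 wk_neq0.
  + by move=> b _ bk; apply: T0; rewrite bk orbT.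
- by rewrite -mcoeff_neq0 x_lead.1.
- by move=> a _ akr; apply: big1 => b _; apply: T0; rewrite akr.
Qed.

Lemma ad_sub_lead c (w : H) (k k' : key) :
    w.2 = 0 -> is_lead w.1 k -> bform (rbar (val kr)) (val k) != 0 ->
    val k' = val kr + val k ->
  is_lead (ad_sub x c w).1 k'.
Proof.
case: le_order => le_total le_trans le_anti le_addr.
move=> w2 w_lead form_neq0 k'E.
have k_le_k' : le (val k) (val k').
  by rewrite k'E -[X in le X _]add0r; exact: le_addr kr_ge0.
have w_top q : le (val k') (val q) -> w.1@_q = 0.
  move=> k'q; apply/eqP/negP => /negP/(w_lead.2) qk.
  have k'k : val k' = val k.
    by apply: le_anti; rewrite k_le_k' (le_trans _ _ _ k'q qk).
  by move/eqP: (valP kr); apply; apply: (addIr (val k)); rewrite add0r -k'E k'k.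
have coefE q : le (val k') (val q) ->
    (ad_sub x c w).1@_q =
    x.1@_kr * w.1@_k * (bform (rbar (val kr)) (val k))%:~R *
    (val q == val k')%:R.
  move=> k'q; have k'q' := k'q; rewrite k'E in k'q'.
  rewrite mcoeffB mcoeffZ w_top // mulr0 subr0 k'E.
  by rewrite (HNbr_lead_coef w2 w_lead k'q') // w_top.
split=> [|q q_neq0].
  rewrite coefE ?(translation_order_refl le_order) // eqxx mulr1.
  by rewrite !mulf_neq0 ?x_lead.1 ?w_lead.1 // intr_eq0_pchar0.
have [//|k'q] := orP (le_total (val q) (val k')).
move: q_neq0; rewrite coefE // mulr_natr mulrb.
case: (val q =P val k') => [-> _|_]; last by rewrite /= eqxx.
exact: translation_order_refl le_order _.
Qed.

Lemma lead_not_locally_finite : ~ ad_locally_finite x.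
Proof.
pose r := val kr; pose p n := rbar r + r *+ n.
have p_form n : bform (rbar r) (p n) = bform (rbar r) (rbar r).
  elim: n => [|n IH]; first by rewrite /p mulr0n addr0.
  by rewrite /p mulrSr addrA bformDr bform_rbarl addr0.
have form_neq0 : bform (rbar r) (rbar r) != 0.
  by rewrite bform_self_eq0 rbar_eq0 (valP kr).
have p_neq0 n : p n != 0.
  by apply: contraNneq form_neq0 => pn0; rewrite -(p_form n) pn0 bform0r.
pose pk n : key := Sub (p n) (p_neq0 n).
pose w0 : H := (<< pk 0%N >>, 0).
have w_lead cs : is_lead (foldr (ad_sub x) w0 cs).1 (pk (size cs)) /\
                 (foldr (ad_sub x) w0 cs).2 = 0.
  elim: cs => [|c cs [w_lead w2]] /=.
    split=> //; split=> [|q]; first by rewrite mcoeffU eqxx oner_neq0.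
    rewrite mcoeffU; case: (pk 0%N =P q) => [<- _|_]; last by rewrite eqxx.
    exact: translation_order_refl le_order _.
  split; last exact: ad_sub_snd.
  apply: ad_sub_lead w2 w_lead _ _; first by rewrite p_form.
  by rewrite /= /p mulrSr addrA addrC.
move=> /(_ w0) [cs fold0]; have [[] + _ _] := w_lead cs.
by rewrite fold0 mcoeff0 eqxx.
Qed.

End LeadingBracket.

End LeadingTerm.

Lemma not_locally_finite (x : H) : x.1 != 0 -> ~ ad_locally_finite x.
Proof.
move=> x1_neq0; have lex_order := @lexle_translation_order (m + m).
have [kr kr_lead] := exists_lead lex_order x1_neq0.
have [kr_ge0|kr_lt0] := boolP (lexle 0 (val kr)).
  exact: lead_not_locally_finite lex_order _ _ kr_lead kr_ge0.
have lex_dual := translation_order_dual lex_order.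
have [kr' kr'_lead] := exists_lead lex_dual x1_neq0.
apply: (lead_not_locally_finite lex_dual kr'_lead).
case: lex_order => lex_total lex_trans _ _.
apply: (lex_trans _ _ _ (kr_lead.2 _ kr'_lead.1)).
by case/orP: (lex_total (val kr) 0) => //; rewrite (negPf kr_lt0).
Qed.

Lemma HNcartan_morph (s : {linear H -> H}) (g : H -> H) :
  {morph s : x y / HNbr x y} -> cancel g s -> {homo s : x / HNcartan x}.
Proof.
move=> s_br gK [f u] /eqP /= ->; apply/negPn/negP => /not_locally_finite; apply.
apply: (ad_locally_finite_morph s_br gK); exact: ad_locally_finite_cartan.
Qed.

End HamiltonianAlgebra.

Theorem lemma3p5 (K : closedFieldType) (charK0 : [pchar K] =i pred0)
    (m : nat) (hm : (0 < m)%N) (sigma : HN K m -> HN K m) :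
  is_HN_aut sigma ->
  maps_onto sigma (@HNder K m) /\ maps_onto sigma (@HNcartan K m).
Proof.
case=> sigma_lin [g sigmaK gK] sigma_br.
pose s : {linear HN K m -> HN K m} :=
  HB.pack sigma (GRing.isLinear.Build _ _ _ _ sigma sigma_lin).
pose t : {linear HN K m -> HN K m} :=
  HB.pack g (GRing.isLinear.Build _ _ _ _ g (can2_linear (f := s) sigmaK gK)).
have g_br : {morph t : x y / HNbr x y} := can2_morph2 sigmaK gK sigma_br.
split; apply: (maps_onto_can gK).
- exact: (HNder_morph charK0 (s := s) sigma_br).
- exact: (HNder_morph charK0 (s := t) g_br).
- exact: (HNcartan_morph charK0 (s := s) sigma_br gK).
- exact: (HNcartan_morph charK0 (s := t) g_br sigmaK).
Qed.
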